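(* Consider an execution of the Adaptive Algorithm. Suppose that at some point an unmatched position $p_j$ and an applicant $a_i$ interview each other and the revealed values satisfy $\epsilon^A_{ij}\ge 0$ and $\epsilon^P_{ji}\ge 0$. Then the algorithm (tentatively) matches $a_i$ and $p_j$ to each other in the next iteration, and afterwards $p_j$ interviews only applicants $a_{i'}$ with $i'<\max(i,j+1)$.
   Context: Model. Let $A=\{a_1,\dots,a_n\}$ be a set of applicants and $P=\{p_1,\dots,p_n\}$ a set of positions. Each applicant $a_i$ has a publicly known value $u_i\in\mathbb R$ and each position $p_j$ a publicly known value $v_j\in\mathbb R$, indexed so that $u_1\ge u_2\ge\dots\ge u_n$ and $v_1\ge v_2\ge\dots\ge v_n$. The random variables $\epsilon^A_{ij}$, $\epsilon^P_{ji}$ ($i,j\in[n]$) are mutually independent and identically distributed according to a known distribution symmetric about $0$ (mean zero). The utility of $a_i$ for $p_j$ is $v_j+\epsilon^A_{ij}$ and the utility of $p_j$ for $a_i$ is $u_i+\epsilon^P_{ji}$; the values $\epsilon^A_{ij},\epsilon^P_{ji}$ become known only when $a_i$ and $p_j$ interview each other. The observed utility $v^o_{ij}$ of $a_i$ for $p_j$ equals $v_j+\epsilon^A_{ij}$ if $a_i,p_j$ have interviewed and $v_j$ otherwise; $u^o_{ji}$ is defined symmetrically ($u_i+\epsilon^P_{ji}$ or $u_i$). Write $p_j\succ_{a_i}p_{j'}$ iff $v^o_{ij}>v^o_{ij'}$ and $a_i\succ_{p_j}a_{i'}$ iff $u^o_{ji}>u^o_{ji'}$ (ties broken in favor of the smaller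 index); every agent prefers any partner to being unmatched. For a matching $\mu$, $\mu(x)$ denotes the partner of $x$ ($\emptyset$ if unmatched). Adaptive Algorithm. Initially all agents are unmatched and $v^o_{ij}=v_j$, $u^o_{ji}=u_i$ for all $i,j$. For an unmatched applicant $a$, let $\beta(a)$ be $a$'s most preferred position (w.r.t. current observed utilities) that has not yet rejected $a$. While some applicant is unmatched: let $j^*$ be the smallest index such that $\beta(a_i)=p_{j^*}$ for some unmatched $a_i$; let $a_{i^*}$ be $p_{j^*}$'s favorite applicant among $\{a_i:\beta(a_i)=p_{j^*},\mu(a_i)=\emptyset\}$. If $a_{i^*},p_{j^*}$ have not interviewed and ($i^*\le j^*$ or $a_{i^*}\succ_{p_{j^*}}\mu(p_{j^*})$), then they interview and $v^o_{i^*j^*},u^o_{j^*i^*}$ are updated. Otherwise: if $\mu(p_{j^*})\succ_{p_{j^*}}a_{i^*}$, then $p_{j^*}$ rejects $a_{i^*}$; else $p_{j^*}$ rejects $\mu(p_{j^*})$ (if nonempty) and $a_{i^*},p_{j^*}$ become matched. When all applicants are matched, output $\mu$. *)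

(* Formalization of the Adaptive Algorithm (deterministic,
   for a fixed realization of the noise terms). Indices are 0-based:
   applicant a_{i+1} is (i : 'I_n), position p_{j+1} is (j : 'I_n). *)
From mathcomp Require Import all_boot all_order all_algebra.
Set Implicit Arguments. Unset Strict Implicit. Unset Printing Implicit Defensive.
Import Order.TTheory GRing.Theory Num.Theory.
Local Open Scope ring_scope.

Section Adaptive.
Variable R : realDomainType.
Variable n : nat.
(* u i = value of applicant i, v j = value of position j,
   eA i j = eps^A_{ij},  eP j i = eps^P_{ji} (revealed realizations). *)
Variables (u v : 'I_n -> R) (eA eP : 'I_n -> 'I_n -> R).

(* State of the algorithm:
   mu  : current position of each applicant (None = unmatched);
   intv: set of pairs (i,j) such that a_i and p_j have interviewed;
   rej : set of pairs (i,j) such that p_j has rejected a_i. *)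
Record state := State {
  mu : {ffun 'I_n -> option 'I_n};
  intv : {set 'I_n * 'I_n};
  rej : {set 'I_n * 'I_n} }.

Definition init : state := State [ffun _ => None] set0 set0.

Definition vo (s : state) (i j : 'I_n) : R :=
  if (i, j) \in intv s then v j + eA i j else v j.
Definition uo (s : state) (j i : 'I_n) : R :=
  if (i, j) \in intv s then u i + eP j i else u i.

Definition prefP (s : state) (i j j' : 'I_n) : bool :=
  (vo s i j' < vo s i j) || ((vo s i j == vo s i j') && (nat_of_ord j < nat_of_ord j')%N).
Definition prefA (s : state) (j i i' : 'I_n) : bool :=
  (uo s j i' < uo s j i) || ((uo s j i == uo s j i') && (nat_of_ord i < nat_of_ord i')%N).

Definition partner (s : state) (j : 'I_n) : option 'I_n := [pick i | mu s i == Some j].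

Definition prefA_opt (s : state) (j i : 'I_n) (o : option 'I_n) : bool :=
  if o is Some i' then prefA s j i i' else true.
Definition prefO (s : state) (j : 'I_n) (o : option 'I_n) (i : 'I_n) : bool :=
  if o is Some i' then prefA s j i' i else false.

Definition beta (s : state) (i : 'I_n) : option 'I_n :=
  [pick j | ((i, j) \notin rej s) &&
     [forall j', (((i, j') \notin rej s) && (j' != j)) ==> prefP s i j j']].

Definition cand (s : state) (j i : 'I_n) : bool :=
  (mu s i == None) && (beta s i == Some j).
Definition target (s : state) (j : 'I_n) : bool := [exists i, cand s j i].

Definition jstar (s : state) : option 'I_n :=
  [pick j | target s j && [forall j', target s j' ==> (nat_of_ord j <= nat_of_ord j')%N]].
Definition istar (s : state) (j : 'I_n) : option 'I_n :=
  [pick i | cand s j i && [forall i', (cand s j i' && (i' != i)) ==> prefA s j i i']].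

Inductive action := Interview of 'I_n & 'I_n | Reject of 'I_n & 'I_n | Match of 'I_n & 'I_n.

(* the action performed in the current iteration (None = algorithm stopped) *)
Definition next_action (s : state) : option action :=
  if [forall i, mu s i != None] then None else
  match jstar s with
  | None => None
  | Some j =>
    match istar s j with
    | None => None
    | Some i =>
      if ((i, j) \notin intv s) &&
         ((nat_of_ord i <= nat_of_ord j)%N || prefA_opt s j i (partner s j))
      then Some (Interview i j)
      else if prefO s j (partner s j) i then Some (Reject j i)
      else Some (Match i j)
    end
  end.

Definition apply_action (s : state) (a : action) : state :=
  match a with
  | Interview i j => State (mu s) ((i, j) |: intv s) (rej s)
  | Reject j i => State (mu s) (intv s) ((i, j) |: rej s)
  | Match i j =>
    match partner s j with
    | None => State [ffun k => if k == i then Some j else mu s k] (intv s) (rej s)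
    | Some i0 => State [ffun k => if k == i then Some j
                                  else if k == i0 then None else mu s k]
                       (intv s) ((i0, j) |: rej s)
    end
  end.

Fixpoint traj (k : nat) : state :=
  match k with
  | 0 => init
  | k'.+1 => let s := traj k' in
             if next_action s is Some a then apply_action s a else s
  end.

End Adaptive.

From mathcomp Require Import all_boot all_order all_algebra.
Set Implicit Arguments. Unset Strict Implicit. Unset Printing Implicit Defensive.
Import Order.TTheory GRing.Theory Num.Theory.
Local Open Scope ring_scope.

(* An interview with nonnegative noise only raises a_i's observed value of p_j
   and p_j's observed value of a_i.  Hence p_j stays a_i's best position, the
   positions targeted by unmatched applicants do not change, and a_i stays p_j's
   favourite candidate; as they have now interviewed and p_j is free, they are
   matched.  From then on p_j only trades up, so it is always held by an
   interviewed applicant whom it ranks at least as high as u_i + eps^P_ji.  An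
   uninterviewed a_i' with i' > j can only be interviewed by p_j if its prior
   value u_i' beats that partner, hence beats u_i + eps^P_ji >= u_i, which
   forces i' < i since the u's decrease. *)

Lemma pick_unique (T : finType) (P : pred T) (x : T) :
  (forall y z, P y -> P z -> y = z) -> P x -> [pick y | P y] = Some x.
Proof.
move=> uniqP Px; case: pickP => [y Py | noP]; first by rewrite (uniqP _ _ Py Px).
by have := noP x; rewrite Px.
Qed.

Lemma pick_Some (T : finType) (P : pred T) (x : T) : [pick y | P y] = Some x -> P x.
Proof. by case: pickP => // y Py [<-]. Qed.

Section Beats.
Context {d : Order.disp_t} {T : orderType d}.
Local Open Scope order_scope.

Definition beats (x y : T) (a b : nat) : bool := (y < x) || ((x == y) && (a < b)%N).

Lemma beats_asym x y a b : beats x y a b -> ~~ beats y x b a.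
Proof.
rewrite /beats; case: (ltgtP x y) => //= _ ab.
by rewrite -leqNgt ltnW.
Qed.

Lemma beats_total x y a b : a != b -> beats x y a b || beats y x b a.
Proof. by rewrite /beats neq_ltn; case: (ltgtP x y) => //= _; case: ltngtP. Qed.

Lemma beats_trans x y z a b c : beats x y a b -> beats y z b c -> beats x z a c.
Proof.
rewrite /beats => /orP[yx|/andP[/eqP xy ab]] /orP[zy|/andP[/eqP yz bc]].
- by rewrite (lt_trans zy yx).
- by rewrite -yz yx.
- by rewrite xy zy.
- by rewrite xy yz eqxx (ltn_trans ab bc) orbT.
Qed.

Lemma beats_le x x' y a b : x <= x' -> beats x y a b -> beats x' y a b.
Proof.
rewrite /beats le_eqVlt => /orP[/eqP<- // | xx'] /orP[yx|/andP[/eqP xy _]].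
- by rewrite (lt_trans yx xx').
- by rewrite -xy xx'.
Qed.

Lemma beats_index x y a b : x <= y -> beats x y a b -> (a < b)%N.
Proof. by rewrite /beats => xy /orP[|/andP[]//]; rewrite ltNge xy. Qed.

Variable m : nat.

Definition is_best (P : pred 'I_m) (f : 'I_m -> T) (x : 'I_m) : bool :=
  P x && [forall y, (P y && (y != x)) ==> beats (f x) (f y) x y].

Definition argbest (P : pred 'I_m) (f : 'I_m -> T) : option 'I_m :=
  [pick x | is_best P f x].

Lemma is_best_unique P f x y : is_best P f x -> is_best P f y -> x = y.
Proof.
move=> /andP[Px /forallP bestx] /andP[Py /forallP besty].
apply/eqP; apply: contraT => xy.
have := implyP (bestx y); rewrite Py eq_sym xy => /(_ isT) /beats_asym.
by have := implyP (besty x); rewrite Px xy => /(_ isT) ->.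
Qed.

Lemma argbest_Some P f x : argbest P f = Some x -> is_best P f x.
Proof. exact: pick_Some. Qed.

Lemma is_best_argbest P f x : is_best P f x -> argbest P f = Some x.
Proof. by apply: pick_unique => y z; apply: is_best_unique. Qed.

Lemma eq_argbest P P' f g : P =1 P' -> f =1 g -> argbest P f = argbest P' g.
Proof.
move=> eqP' eqfg; apply: eq_pick => x; rewrite /is_best eqP'; congr (_ && _).
by apply: eq_forallb => y; rewrite eqP' !eqfg.
Qed.

Lemma is_best_raise P f g w :
  is_best P f w -> f w <= g w -> (forall y, y != w -> g y = f y) -> is_best P g w.
Proof.
move=> /andP[Pw /forallP bestw] fg gf; rewrite /is_best Pw.
apply/forallP => y; apply/implyP => /[dup] /andP[_ yw] Pyw.
by rewrite (gf y yw); apply: beats_le fg _; exact: implyP (bestw y) Pyw.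
Qed.

End Beats.

Section AdaptiveAlgorithm.
Variables (R : realDomainType) (n : nat).
Variables (u v : 'I_n -> R) (eA eP : 'I_n -> 'I_n -> R).

Local Notation state := (state n).
Local Notation vo := (vo v eA).
Local Notation uo := (uo u eP).
Local Notation prefA_opt := (prefA_opt u eP).
Local Notation beta := (beta v eA).
Local Notation cand := (cand v eA).
Local Notation target := (target v eA).
Local Notation jstar := (jstar v eA).
Local Notation istar := (istar u v eA eP).
Local Notation next_action := (next_action u v eA eP).
Local Notation traj := (traj u v eA eP).

Definition step (s : state) : state :=
  if next_action s is Some a then apply_action s a else s.

Lemma trajS (k : nat) : traj k.+1 = step (traj k).
Proof. by []. Qed.

Lemma beta_argbest (s : state) (i : 'I_n) :
  beta s i = argbest (fun j => (i, j) \notin rej s) (vo s i).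
Proof. by []. Qed.

Lemma istar_argbest (s : state) (j : 'I_n) : istar s j = argbest (cand s j) (uo s j).
Proof. by []. Qed.

Lemma istar_cand (s : state) (j i : 'I_n) : istar s j = Some i -> cand s j i.
Proof. by rewrite istar_argbest => /argbest_Some /andP[]. Qed.

Lemma istar_unmatched (s : state) (j i : 'I_n) : istar s j = Some i -> mu s i = None.
Proof. by move/istar_cand => /andP[/eqP]. Qed.

Lemma uo_intv (s : state) (j i : 'I_n) : (i, j) \in intv s -> uo s j i = u i + eP j i.
Proof. by rewrite /uo => ->. Qed.

Lemma partner_Some (s : state) (j i : 'I_n) : partner s j = Some i -> mu s i = Some j.
Proof. by move/pick_Some/eqP. Qed.

Lemma partner_None (s : state) (j i : 'I_n) : partner s j = None -> mu s i <> Some j.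
Proof. by rewrite /partner; case: pickP => // noP _ /eqP; rewrite noP. Qed.

Lemma next_action_interview (s : state) (i j : 'I_n) :
  next_action s = Some (Interview i j) ->
  [/\ ~~ [forall x, mu s x != None], jstar s = Some j, istar s j = Some i,
      (i, j) \notin intv s & (i <= j)%N || prefA_opt s j i (partner s j)].
Proof.
rewrite /next_action; case: ifP => // _.
case: jstar => // b; case ia: istar => [a|] //.
case: ifP => [/andP[? ?] [<- <-] // | _].
by case: ifP.
Qed.

Lemma next_action_match (s : state) (a b : 'I_n) :
  next_action s = Some (Match a b) ->
  [/\ istar s b = Some a, (a, b) \in intv s & prefA_opt s b a (partner s b)].
Proof.
rewrite /next_action; case: ifP => // _.
case: jstar => // b'; case ia: istar => [a'|] //.
case: ifP => // not_interview; case: ifP => // not_reject [<- <-].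
have pref : prefA_opt s b' a' (partner s b').
  case pb: (partner s b') not_reject => [p|] //= /negbT not_reject.
  have a'p : a' != p.
    by apply/eqP => a'p; move: (istar_unmatched ia); rewrite a'p (partner_Some pb).
  case/orP: (beats_total (uo s b' a') (uo s b' p) (a'p : nat_of_ord a' != p)) => //.
  by move=> pa'; case/negP: not_reject.
by move: not_interview; rewrite pref orbT andbT => /negbFE.
Qed.

Section Interview.
Variables (s : state) (i j : 'I_n).
Hypotheses (ia : istar s j = Some i) (fresh : (i, j) \notin intv s).
Hypotheses (eA_ge0 : 0 <= eA i j) (eP_ge0 : 0 <= eP j i).
Let s' := apply_action s (Interview i j).

Lemma vo_interview x y :
  vo s' x y = if (x == i) && (y == j) then v j + eA i j else vo s x y.
Proof.
rewrite /vo /= in_setU1 xpair_eqE.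
by case: (boolP ((x == i) && (y == j))) => [/andP[/eqP-> /eqP->] |].
Qed.

Lemma uo_interview y x :
  uo s' y x = if (x == i) && (y == j) then u i + eP j i else uo s y x.
Proof.
rewrite /uo /= in_setU1 xpair_eqE.
by case: (boolP ((x == i) && (y == j))) => [/andP[/eqP-> /eqP->] |].
Qed.

Lemma beta_interview x : beta s' x = beta s x.
Proof.
have /andP[_ /eqP bij] := istar_cand ia.
have [->{x} | xi] := eqVneq x i; last first.
  by rewrite !beta_argbest; apply: eq_argbest => // y; rewrite vo_interview (negbTE xi).
rewrite bij beta_argbest; apply/is_best_argbest/(is_best_raise (f := vo s i)).
- by move: bij; rewrite beta_argbest => /argbest_Some.
- by rewrite vo_interview !eqxx /vo (negbTE fresh) lerDl.
- by move=> y yj; rewrite vo_interview (negbTE yj) andbF.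
Qed.

Lemma cand_interview y x : cand s' y x = cand s y x.
Proof. by rewrite /cand beta_interview. Qed.

Lemma jstar_interview : jstar s' = jstar s.
Proof.
have target_interview y : target s' y = target s y.
  by apply: eq_existsb => x; rewrite cand_interview.
apply: eq_pick => y; rewrite /= target_interview.
by congr (_ && _); apply: eq_forallb => z; rewrite target_interview.
Qed.

Lemma istar_interview : istar s' j = Some i.
Proof.
rewrite istar_argbest (@eq_argbest _ _ _ _ (cand s j) _ (uo s' j)).
- apply/is_best_argbest/(is_best_raise (f := uo s j)); first exact: argbest_Some ia.
  + by rewrite uo_interview !eqxx /uo (negbTE fresh) lerDl.
  + by move=> y yi; rewrite uo_interview (negbTE yi).
- by move=> x; rewrite /= cand_interview.
- by [].
Qed.

End Interview.

Lemma next_action_after_interview (s : state) (i j : 'I_n) :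
  next_action s = Some (Interview i j) -> partner s j = None ->
  0 <= eA i j -> 0 <= eP j i -> next_action (step s) = Some (Match i j).
Proof.
move=> na pj eA_ge0 eP_ge0; have [notall js ia fresh _] := next_action_interview na.
rewrite /step na /next_action (negbTE notall) (jstar_interview ia fresh eA_ge0) js.
rewrite (istar_interview ia fresh eA_ge0 eP_ge0) in_setU1 eqxx /=.
by rewrite [partner _ j]pj.
Qed.

Lemma mu_match (s : state) (a b x : 'I_n) :
  mu (apply_action s (Match a b)) x =
  if x == a then Some b else if partner s b == Some x then None else mu s x.
Proof.
by rewrite /apply_action; case: (partner s b) => [p|] /=; rewrite ffunE // (eq_sym (Some p)).
Qed.

Lemma intv_match (s : state) (a b : 'I_n) : intv (apply_action s (Match a b)) = intv s.
Proof. by rewrite /apply_action; case: (partner s b). Qed.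

Definition secured (i j : 'I_n) (s : state) : Prop :=
  (exists x, mu s x = Some j) /\
  forall x, mu s x = Some j ->
    (x, j) \in intv s /\ (x = i \/ beats (u x + eP j x) (u i + eP j i) x i).

Lemma secured_first_match (s : state) (i j : 'I_n) :
  next_action s = Some (Match i j) -> partner s j = None ->
  secured i j (apply_action s (Match i j)).
Proof.
move=> /next_action_match[_ ij_intv _] pj; rewrite /secured intv_match.
split=> [|x]; first by exists i; rewrite mu_match eqxx.
rewrite mu_match pj; case: eqVneq => [-> _ | _ /= xj]; first by split=> //; left.
by case: (partner_None pj xj).
Qed.

Lemma secured_match (s : state) (i j a b : 'I_n) :
  next_action s = Some (Match a b) -> secured i j s ->
  secured i j (apply_action s (Match a b)).
Proof.
move=> /next_action_match[ia ab_intv a_pref] [[x xj] held].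
have a_free := istar_unmatched ia.
rewrite /secured intv_match; split.
  have [-> | bj] := eqVneq b j; first by exists a; rewrite mu_match eqxx.
  exists x; rewrite mu_match; case: eqVneq => [xa | _]; first by rewrite xa a_free in xj.
  case: eqVneq => [/partner_Some | _ //]; rewrite xj => -[bj'].
  by rewrite bj' eqxx in bj.
move=> y; rewrite mu_match; case: eqVneq => [-> [bj] | _]; last first.
  by case: eqVneq => // _ /held.
subst b; split=> //; right.
case pj: (partner s j) a_pref => [p|] /=; last by case: (partner_None pj xj).
have [p_intv p_ge] := held p (partner_Some pj).
rewrite /prefA /= (uo_intv ab_intv) (uo_intv p_intv) => a_beats_p.
by case: p_ge => [<- // | p_beats_i]; apply: beats_trans a_beats_p p_beats_i.
Qed.

Lemma secured_step (i j : 'I_n) (s : state) : secured i j s -> secured i j (step s).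
Proof.
rewrite /step; case na: next_action => [[a b | b a | a b] |] //.
- move=> [matched held]; split=> // x /held[xj_intv x_ge].
  by split=> //; rewrite /= in_setU1 xj_intv orbT.
- exact: secured_match na.
Qed.

Lemma secured_traj (i j : 'I_n) (k k' : nat) :
  secured i j (traj k) -> (k <= k')%N -> secured i j (traj k').
Proof.
move=> sec /subnK <-; elim: (k' - k)%N => [// | d IH].
by rewrite addSn trajS; apply: secured_step.
Qed.

Lemma secured_next_interview (i j i' : 'I_n) (s : state) :
  (forall x y : 'I_n, (nat_of_ord x <= nat_of_ord y)%N -> u y <= u x) ->
  secured i j s -> 0 <= eP j i ->
  next_action s = Some (Interview i' j) -> (i' < maxn i j.+1)%N.
Proof.
move=> u_anti [[x xj] held] eP_ge0 /next_action_interview[_ _ _ fresh cond].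
rewrite leq_max ltnS; case: (leqP i' j) cond => [_ | j_lt_i']; rewrite ?orbT //=.
case pj: (partner s j) => [p|] /=; last by case: (partner_None pj xj).
have [p_intv p_ge] := held p (partner_Some pj).
rewrite /prefA /= (uo_intv p_intv) /uo (negbTE fresh) => i'_beats_p.
have i'_beats_i : beats (u i') (u i + eP j i) i' i.
  by case: p_ge i'_beats_p => [-> // | p_beats_i /beats_trans]; apply.
case: (ltnP i' i) => // i_le_i'; have := beats_index _ i'_beats_i.
by rewrite ltnNge i_le_i'; apply; rewrite (le_trans (u_anti _ _ i_le_i')) ?lerDl.
Qed.

End AdaptiveAlgorithm.

Theorem claim2p2 (R : realDomainType) (n : nat) (u v : 'I_n -> R)
  (eA eP : 'I_n -> 'I_n -> R)
  (hu : forall i i' : 'I_n, (nat_of_ord i <= nat_of_ord i')%N -> u i' <= u i)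
  (hv : forall j j' : 'I_n, (nat_of_ord j <= nat_of_ord j')%N -> v j' <= v j)
  (k : nat) (i j : 'I_n) :
  next_action u v eA eP (traj u v eA eP k) = Some (Interview i j) ->
  partner (traj u v eA eP k) j = None ->
  0 <= eA i j -> 0 <= eP j i ->
  next_action u v eA eP (traj u v eA eP k.+1) = Some (Match i j) /\
  (forall (k' : nat) (i' : 'I_n), (k < k')%N ->
     next_action u v eA eP (traj u v eA eP k') = Some (Interview i' j) ->
     (nat_of_ord i' < maxn (nat_of_ord i) (nat_of_ord j).+1)%N).
Proof.
move=> na pj eA_ge0 eP_ge0.
have na1 : next_action u v eA eP (traj u v eA eP k.+1) = Some (Match i j).
  by rewrite trajS; apply: next_action_after_interview.
have pj1 : partner (traj u v eA eP k.+1) j = None by rewrite trajS /step na.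
have sec2 : secured u eP i j (traj u v eA eP k.+2).
  by rewrite trajS /step na1; exact: secured_first_match na1 pj1.
split=> // k' i'; rewrite leq_eqVlt => /orP[/eqP <- | lt_k'].
  by rewrite na1.
exact: secured_next_interview hu (secured_traj sec2 lt_k') eP_ge0.
Qed.
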